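(* Let $\mu$ be a nonvanishing differentiable real function and $\omega^2$ a real function of $t$. The initial value problem for the variable parametric potential Burgers equation $$\frac{\partial\Upsilon}{\partial t}+\frac{\dot\mu(t)}{\mu(t)}\Upsilon+\frac12\Big(\frac{\partial\Upsilon}{\partial x}\Big)^2=\frac{1}{2\mu(t)}\frac{\partial^2\Upsilon}{\partial x^2}-\frac{\omega^2(t)}{2}x^2,\qquad \Upsilon(x,t)|_{t=t_0}=\Upsilon(x,t_0),$$ has the formal solution $\Upsilon(x,t)=-\frac{1}{\mu(t)}\ln\Phi(x,t)$, where $\Phi(x,t)$ satisfies the initial value problem for the variable parametric parabolic equation $$\frac{\partial\Phi}{\partial t}=\frac{1}{2\mu(t)}\frac{\partial^2\Phi}{\partial x^2}+\frac{\mu(t)\omega^2(t)}{2}x^2\Phi,\qquad \Phi(x,t_0)=\exp\big(-\mu(t_0)\Upsilon(x,t_0)\big).$$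
   Context: Dots denote $t$-derivatives. *)

From Stdlib Require Import Reals.
From Coquelicot Require Import Coquelicot.
Open Scope R_scope.

Definition d_t (F : R -> R -> R) (x t : R) : R := Derive (fun s => F x s) t.
Definition d_x (F : R -> R -> R) (x t : R) : R := Derive (fun y => F y t) x.
Definition d_xx (F : R -> R -> R) (x t : R) : R := Derive (fun y => d_x F y t) x.

Definition upsilon_of (mu : R -> R) (Phi : R -> R -> R) (x t : R) : R :=
  - (1 / mu t) * ln (Phi x t).

(* Cole-Hopf: with [Phi = exp (-mu Ups)], the x-derivatives of [Ups] are
   [-(1/mu) Phi_x/Phi] and [-(1/mu) (Phi_xx/Phi - (Phi_x/Phi)^2)], and its
   t-derivative is [mu'/mu^2 ln Phi - (1/mu) Phi_t/Phi].  Substituting the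
   parabolic equation for [Phi_t], the squared term [(Phi_x/Phi)^2] cancels
   against [1/2 (Ups_x)^2] and the [mu'] term against [mu'/mu Ups], which
   leaves exactly the Burgers equation. *)
From Stdlib Require Import Reals Lra FunctionalExtensionality.
From Coquelicot Require Import Coquelicot.
Open Scope R_scope.

Section ColeHopf.

Variables (mu : R -> R) (Phi : R -> R -> R).
Hypothesis Phi_pos : forall x t, 0 < Phi x t.

Let Ups := upsilon_of mu Phi.

Lemma is_derive_upsilon_x x t :
  ex_derive (fun y => Phi y t) x ->
  is_derive (fun y => Ups y t) x (- (1 / mu t) * (d_x Phi x t / Phi x t)).
Proof.
intros HPhi_x; unfold Ups, upsilon_of, d_x.
pose proof (Phi_pos x t).
auto_derive; [repeat split; auto | unfold Rdiv; ring].
Qed.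

Lemma d_x_upsilon t :
  (forall x, ex_derive (fun y => Phi y t) x) ->
  (fun x => d_x Ups x t) = (fun x => - (1 / mu t) * (d_x Phi x t / Phi x t)).
Proof.
intros HPhi_x; apply functional_extensionality; intros x.
exact (is_derive_unique _ _ _ (is_derive_upsilon_x x t (HPhi_x x))).
Qed.

Lemma is_derive_upsilon_xx x t :
  (forall y, ex_derive (fun y => Phi y t) y) ->
  ex_derive (fun y => d_x Phi y t) x ->
  is_derive (fun y => d_x Ups y t) x
    (- (1 / mu t) * (d_xx Phi x t / Phi x t - (d_x Phi x t / Phi x t) ^ 2)).
Proof.
intros HPhi_x HPhi_xx; rewrite d_x_upsilon by exact HPhi_x.
pose proof (Phi_pos x t); pose proof (HPhi_x x); unfold d_xx.
auto_derive.
- repeat split; auto; lra.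
- unfold d_x; f_equal; field; lra.
Qed.

Lemma is_derive_upsilon_t x t :
  mu t <> 0 -> ex_derive mu t -> ex_derive (fun s => Phi x s) t ->
  is_derive (fun s => Ups x s) t
    (Derive mu t / mu t ^ 2 * ln (Phi x t) - 1 / mu t * (d_t Phi x t / Phi x t)).
Proof.
intros Hmu_nz Hmu_diff HPhi_t; unfold Ups, upsilon_of, d_t.
pose proof (Phi_pos x t).
auto_derive; [repeat split; auto |].
change (fun s => mu s) with mu; field; split; [lra | auto].
Qed.

End ColeHopf.

Lemma upsilon_of_exp (mu : R -> R) (Phi : R -> R -> R) (u : R) x t :
  mu t <> 0 -> Phi x t = exp (- (mu t * u)) -> upsilon_of mu Phi x t = u.
Proof.
intros Hmu_nz HPhi; unfold upsilon_of; rewrite HPhi, ln_exp; field; exact Hmu_nz.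
Qed.

Theorem proposition4
  (mu omega2 : R -> R) (t0 : R) (Ups0 : R -> R) (Phi : R -> R -> R)
  (Hmu_nz : forall t, mu t <> 0)
  (Hmu_diff : forall t, ex_derive mu t)
  (HPhi_pos : forall x t, 0 < Phi x t)
  (HPhi_t : forall x t, ex_derive (fun s => Phi x s) t)
  (HPhi_x : forall x t, ex_derive (fun y => Phi y t) x)
  (HPhi_xx : forall x t, ex_derive (fun y => d_x Phi y t) x)
  (HPhi_pde : forall x t,
     d_t Phi x t = 1 / (2 * mu t) * d_xx Phi x t
                   + mu t * omega2 t / 2 * x ^ 2 * Phi x t)
  (HPhi_init : forall x, Phi x t0 = exp (- (mu t0 * Ups0 x))) :
  let Ups := upsilon_of mu Phi in
  (forall x t,
     ex_derive (fun s => Ups x s) t /\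
     ex_derive (fun y => Ups y t) x /\
     ex_derive (fun y => d_x Ups y t) x /\
     d_t Ups x t + Derive mu t / mu t * Ups x t + 1 / 2 * (d_x Ups x t) ^ 2
       = 1 / (2 * mu t) * d_xx Ups x t - omega2 t / 2 * x ^ 2) /\
  (forall x, Ups x t0 = Ups0 x).
Proof.
intros Ups; subst Ups; split; intros x;
  [intros t | exact (upsilon_of_exp mu Phi (Ups0 x) x t0 (Hmu_nz t0) (HPhi_init x))].
pose proof (is_derive_upsilon_t mu Phi HPhi_pos x t (Hmu_nz t) (Hmu_diff t) (HPhi_t x t)) as Dt.
pose proof (is_derive_upsilon_x mu Phi HPhi_pos x t (HPhi_x x t)) as Dx.
pose proof (is_derive_upsilon_xx mu Phi HPhi_pos x t (fun y => HPhi_x y t) (HPhi_xx x t)) as Dxx.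
split; [eexists; exact Dt |].
split; [eexists; exact Dx |].
split; [eexists; exact Dxx |].
rewrite (is_derive_unique _ _ _ Dt : d_t _ x t = _),
        (is_derive_unique _ _ _ Dxx : d_xx _ x t = _),
        (is_derive_unique _ _ _ Dx : d_x _ x t = _), HPhi_pde.
pose proof (HPhi_pos x t); pose proof (Hmu_nz t); unfold upsilon_of.
field; split; [lra | auto].
Qed.
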